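(* Let $M=(E,\mathcal{I})$ be a matroid with rank function $r$, and let $L\in\mathbb{R}^{E\times E}$ be symmetric ($L^T=L$). Let $x\in B(M)$, and let $\{P_1,\dots,P_k\}$ be the partition of $E$ such that $(Lx)(e)=c_i$ for all $e\in P_i$, with $c_1<c_2<\dots<c_k$. Then the following are equivalent: (i) $(x,x)$ is a symmetric Nash equilibrium; (ii) all bases of $M$ have the same cost with respect to the weights $Lx$; (iii) for every base $B$ of $M$ and every $i$, $|B\cap P_i|=r(P_i)$; (iv) $x(P_i)=r(P_i)$ for all $i\in\{1,\dots,k\}$; (v) for every circuit $C$ of $M$ there exists $i$ with $C\subseteq P_i$.
   Context: $B(M)=\{x\in\mathbb{R}^E: x\ge0,\ x(S)\le r(S)\ \forall S\subseteq E,\ x(E)=r(E)\}$ is the base polytope, $x(S)=\sum_{e\in S}x(e)$. The matroid game: the row player chooses $x\in B(M)$ and wants to minimize $x^TLy$, the column player chooses $y\in B(M)$ and wants to maximize it. $(x,x)$ with $x\in B(M)$ is a symmetric Nash equilibrium if $x^TLz\le x^TLx\le z^TLx$ for all $z\in B(M)$. The cost of a base $B$ w.r.t. weights $w$ is $\sum_{e\in B}w(e)$. *)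

From HB Require Import structures.
From mathcomp Require Import all_boot all_order all_algebra.
From mathcomp Require Import reals.
Set Implicit Arguments. Unset Strict Implicit. Unset Printing Implicit Defensive.
Import Order.TTheory GRing.Theory Num.Theory.
Local Open Scope ring_scope.

Record matroid (E : finType) := Matroid {
  indep : {set {set E}};
  indep_set0 : set0 \in indep;
  indep_sub : forall A B : {set E}, B \in indep -> A \subset B -> A \in indep;
  indep_exch : forall A B : {set E}, A \in indep -> B \in indep ->
     (#|A| < #|B|)%N -> exists2 e, e \in B :\: A & e |: A \in indep
}.

Section Matroid.
Variable E : finType.
Variable M : matroid E.

Definition rank (S : {set E}) : nat :=
  \max_(I in indep M | I \subset S) #|I|.

Definition is_base (B : {set E}) : bool := maxset (fun A => A \in indep M) B.

Definition is_circuit (C : {set E}) : bool := minset (fun A => A \notin indep M) C.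

Variable R : realType.

Definition xsum (x : E -> R) (S : {set E}) : R := \sum_(e in S) x e.

Definition in_base_polytope (x : E -> R) : Prop :=
  (forall e, 0 <= x e) /\
  (forall S : {set E}, xsum x S <= (rank S)%:R) /\
  xsum x setT = (rank setT)%:R.

Definition matvec (L : E -> E -> R) (x : E -> R) (e : E) : R :=
  \sum_(f : E) L e f * x f.

Definition bilin (x : E -> R) (L : E -> E -> R) (y : E -> R) : R :=
  \sum_(e : E) \sum_(f : E) x e * L e f * y f.

Definition sym_nash (L : E -> E -> R) (x : E -> R) : Prop :=
  in_base_polytope x /\
  forall z, in_base_polytope z ->
    bilin x L z <= bilin x L x /\ bilin x L x <= bilin z L x.

Definition cost (w : E -> R) (B : {set E}) : R := \sum_(e in B) w e.

(* the class P_i of the partition of E by the values of w containing e *)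
Definition level_set (w : E -> R) (e : E) : {set E} := [set f | w f == w e].

End Matroid.

From HB Require Import structures.
From mathcomp Require Import all_boot all_order all_algebra.
From mathcomp Require Import reals ring.
Import Order.TTheory GRing.Theory Num.Theory.
Local Open Scope ring_scope.
Set Implicit Arguments. Unset Strict Implicit.

(* Write w := Lx.  Since L is symmetric, x^T L z = z^T L x = w.z, so (x,x) is
   a Nash equilibrium iff w.z = w.x on the whole base polytope, in particular
   on the indicator vectors of bases: this is (i) <-> (ii).  If two elements
   e, f of a circuit had different weights, a base containing C - e and the
   base obtained by swapping f for e would have different costs, so (ii)
   gives (v).  Under (v) a base B meets every level set P in a maximal
   independent subset of P, since the fundamental circuit of any g in P - B
   lies in P; this is (iii).  Finally, for z in B(M) the level sums z(P) are
   bounded by r(P), and a vector attaining all these bounds forces every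
   z in B(M) to attain them, because both sums add up to r(E) = z(E).  By
   (iii) the indicator of a base attains them, giving (iv); and under (iv)
   w.z = sum_P w_P r(P) does not depend on z, giving (i). *)

Section MatroidFacts.
Variables (E : finType) (M : matroid E).
Implicit Types (B C I J S : {set E}).

Lemma leq_card_rank S I : I \in indep M -> I \subset S -> (#|I| <= rank M S)%N.
Proof.
move=> indI sIS; rewrite /rank.
by apply: (leq_bigmax_cond (P := fun I => (I \in indep M) && (I \subset S)));
  rewrite indI sIS.
Qed.

Lemma rank_witness S : exists2 J, J \in indep M & J \subset S /\ #|J| = rank M S.
Proof.
have : (0 < #|[pred I : {set E} | (I \in indep M) && (I \subset S)]|)%N.
  by apply/card_gt0P; exists set0; rewrite inE indep_set0 sub0set.
case/(eq_bigmax_cond (fun I : {set E} => #|I|)) => J; rewrite inE.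
by case/andP=> indJ sJS cardJ; exists J.
Qed.

Lemma card_maximal_indep S I :
  I \in indep M -> I \subset S ->
  (forall g, g \in S -> g \notin I -> g |: I \notin indep M) ->
  #|I| = rank M S.
Proof.
move=> indI sIS maxI; apply/eqP; rewrite eqn_leq leq_card_rank //=.
have [J indJ [sJS <-]] := rank_witness S; rewrite leqNgt; apply/negP => ltIJ.
have [g] := indep_exch indI indJ ltIJ; rewrite inE => /andP[gNI gJ].
by have := maxI g (subsetP sJS g gJ) gNI => /negbTE->.
Qed.

Lemma base_indep B : is_base M B -> B \in indep M.
Proof. by case/maxsetP. Qed.

Lemma base_add_dep B g : is_base M B -> g \notin B -> g |: B \notin indep M.
Proof.
case/maxsetP=> _ maxB gNB; apply/negP => /maxB /(_ (subsetUr _ _)) /setP/(_ g).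
by rewrite !inE eqxx (negbTE gNB).
Qed.

Lemma card_base B : is_base M B -> #|B| = rank M setT.
Proof.
move=> baseB; apply: card_maximal_indep (base_indep baseB) (subsetT _) _.
by move=> g _; apply: base_add_dep.
Qed.

Lemma base_of_card J : J \in indep M -> #|J| = rank M setT -> is_base M J.
Proof.
move=> indJ cardJ; apply/maxsetP; split => // A indA sJA.
apply/eqP; rewrite eq_sym eqEcard sJA cardJ.
exact: leq_card_rank (subsetT _).
Qed.

Lemma exists_base : exists B, is_base M B.
Proof.
by have [B baseB _] := maxset_exists (P := fun A => A \in indep M) (indep_set0 M);
  exists B.
Qed.

Lemma indep_augment I B :
  I \in indep M -> B \in indep M -> (#|I| <= #|B|)%N ->
  exists J, [/\ J \in indep M, I \subset J, J \subset I :|: B & #|J| = #|B|].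
Proof.
move hn: (#|B| - #|I|)%N => n; elim: n I hn => [|n IHn] I hn indI indB leIB.
  exists I; split; rewrite ?subsetUl //.
  by apply/eqP; rewrite eqn_leq leIB -subn_eq0 hn.
have ltIB : (#|I| < #|B|)%N by rewrite -subn_gt0 hn.
have [e] := indep_exch indI indB ltIB.
rewrite inE => /andP[eNI eB] indeI.
have cardeI : #|e |: I| = #|I|.+1 by rewrite cardsU1 eNI.
have hn' : (#|B| - #|e |: I| = n)%N by rewrite cardeI subnS hn.
have leeIB : (#|e |: I| <= #|B|)%N by rewrite cardeI.
have [J [indJ seIJ sJeIB cardJ]] := IHn _ hn' indeI indB leeIB.
exists J; split => //; first exact: subset_trans (subsetUr _ _) seIJ.
apply: (subset_trans sJeIB); apply/subsetP => y; rewrite !inE.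
by case/orP => [/orP[/eqP->|->]|->]; rewrite ?eB ?orbT.
Qed.

Lemma circuit_dep C : is_circuit M C -> C \notin indep M.
Proof. by case/minsetP. Qed.

Lemma circuit_delete_indep C a : is_circuit M C -> a \in C -> C :\ a \in indep M.
Proof.
case/minsetP=> _ minC aC; apply/negPn/negP => /minC /(_ (subD1set C a)).
by move/setP/(_ a); rewrite !inE eqxx aC.
Qed.

Lemma circuit_base_exchange C e f :
  is_circuit M C -> e \in C -> f \in C -> f != e ->
  exists B, [/\ is_base M B, f \in B, e \notin B & is_base M (e |: (B :\ f))].
Proof.
move=> circC eC fC fNe.
have [B baseB sCeB] :=
  maxset_exists (P := fun A => A \in indep M) (circuit_delete_indep circC eC).
have indB := base_indep baseB.
have subC a (A : {set E}) : C :\ a \subset A -> a \in A -> C \subset A.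
  move=> sCaA aA; apply/subsetP => y yC; case: (eqVneq y a) => [-> //|yNa].
  by apply: (subsetP sCaA); rewrite !inE yNa.
have eNB : e \notin B.
  by apply: contra (circuit_dep circC) => eB; apply: indep_sub indB (subC _ _ sCeB eB).
have fB : f \in B by apply: (subsetP sCeB); rewrite !inE fNe.
have cardCf : #|C :\ f| = #|C :\ e|.
  by have := cardsD1 f C; rewrite (cardsD1 e C) eC fC => /addnI->.
(* Augmenting C - f from B yields a set avoiding f (it cannot contain C), hence
   equal to e + (B - f). *)
have [|J [indJ sCfJ sJCfB cardJ]] :=
  indep_augment (circuit_delete_indep circC fC) indB.
  by rewrite cardCf subset_leq_card.
have fNJ : f \notin J.
  by apply: contra (circuit_dep circC) => fJ; apply: indep_sub indJ (subC _ _ sCfJ fJ).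
have eNBf : e \notin B :\ f by rewrite inE (negbTE eNB) andbF.
have eBfJ : e |: (B :\ f) = J.
  apply/eqP; rewrite eq_sym eqEcard cardsU1 eNBf cardJ (cardsD1 f B) fB leqnn andbT.
  apply/subsetP => y yJ; have := subsetP sJCfB y yJ.
  have yNf : y != f by apply: contraNneq fNJ => <-.
  rewrite !inE yNf /= => /orP[yC|->]; last by rewrite orbT.
  case: (eqVneq y e) => [//|yNe] /=.
  by apply: (subsetP sCeB); rewrite !inE yNe.
by exists B; split; rewrite // eBfJ base_of_card // cardJ card_base.
Qed.

Lemma fundamental_circuit B g :
  is_base M B -> g \notin B ->
  exists C, [/\ is_circuit M C, g \in C & C \subset g |: B].
Proof.
move=> baseB gNB.
have [C circC sCgB] :=
  minset_exists (P := fun A => A \notin indep M) (base_add_dep baseB gNB).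
exists C; split => //; apply: contraT => gNC.
apply: contraR (circuit_dep circC) => _; apply: indep_sub (base_indep baseB) _.
apply/subsetP => y yC; move: (subsetP sCgB y yC); rewrite !inE.
by case/orP => [/eqP yg|//]; move: gNC; rewrite -yg yC.
Qed.

End MatroidFacts.

Section LevelSets.
Variables (E : finType) (R : realType) (w : E -> R).
Local Notation P := (level_set w).

Lemma mem_level_set e : e \in P e.
Proof. by rewrite inE. Qed.

Lemma level_set_eq e f : f \in P e -> P f = P e.
Proof. by rewrite inE => /eqP wfe; apply/setP => g; rewrite !inE wfe. Qed.

Lemma card_level_set_neq0 e : #|P e|%:R != 0 :> R.
Proof. by rewrite pnatr_eq0 -lt0n; apply/card_gt0P; exists e; rewrite mem_level_set. Qed.

(* Each level set P is counted #|P| times when e ranges over E. *)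
Lemma sum_level_sets (h : E -> R) :
  \sum_e xsum h (P e) / #|P e|%:R = \sum_e h e.
Proof.
transitivity (\sum_e \sum_(f in P e) h f / #|P f|%:R).
  apply: eq_bigr => e _; rewrite /xsum mulr_suml.
  by apply: eq_bigr => f fPe; rewrite (level_set_eq fPe).
under eq_bigr => e _ do rewrite big_mkcond /=.
rewrite exchange_big /=; apply: eq_bigr => f _; rewrite -big_mkcond /=.
transitivity (\sum_(e in P f) h f / #|P f|%:R).
  by apply: eq_bigl => e; rewrite !inE eq_sym.
by rewrite sumr_const -[_ *+ #|_|]mulr_natr divfK ?card_level_set_neq0.
Qed.

Lemma dot_level_sets (z : E -> R) :
  \sum_e w e * z e = \sum_e w e * xsum z (P e) / #|P e|%:R.
Proof.
rewrite -(sum_level_sets (fun f => w f * z f)); apply: eq_bigr => e _.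
rewrite /xsum mulr_sumr; congr (_ / _); apply: eq_bigr => f.
by rewrite inE => /eqP->.
Qed.

Lemma xsum_setT (h : E -> R) : xsum h setT = \sum_e h e.
Proof. by apply: eq_bigl => e; rewrite inE. Qed.

Lemma level_sums_eq (a b : E -> R) :
  (forall e, xsum a (P e) <= xsum b (P e)) -> xsum a setT = xsum b setT ->
  forall e, xsum a (P e) = xsum b (P e).
Proof.
move=> leab eqT.
have sum0 : \sum_e (xsum b (P e) - xsum a (P e)) / #|P e|%:R = 0.
  under eq_bigr => e _ do rewrite -sumrB.
  by rewrite sum_level_sets sumrB -!xsum_setT eqT subrr.
move=> e; apply/eqP; rewrite eq_sym -subr_eq0.
have ge0 f (_ : true) : 0 <= (xsum b (P f) - xsum a (P f)) / #|P f|%:R.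
  by rewrite divr_ge0 ?subr_ge0.
have /eqP := psumr_eq0P ge0 sum0 (i := e) isT.
by rewrite mulf_eq0 invr_eq0 (negbTE (card_level_set_neq0 e)) orbF.
Qed.

End LevelSets.

Section MatroidGame.
Variables (E : finType) (M : matroid E) (R : realType) (L : E -> E -> R).
Hypothesis L_sym : forall e f, L e f = L f e.

Definition indicator (B : {set E}) (e : E) : R := (e \in B)%:R.

Lemma xsum_indicator B S : xsum (indicator B) S = #|B :&: S|%:R.
Proof.
rewrite /xsum /indicator (big_setID B) /= [X in _ + X]big1 ?addr0; last first.
  by move=> e; rewrite inE => /andP[/negbTE->].
rewrite setIC -sumr_const; apply: eq_bigr => e.
by rewrite inE => /andP[->].
Qed.

Lemma indicator_base_polytope B : is_base M B -> in_base_polytope M (indicator B).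
Proof.
move=> baseB; split; [|split].
- by move=> e; rewrite ler0n.
- move=> S; rewrite xsum_indicator ler_nat; apply: leq_card_rank (subsetIr _ _).
  exact: indep_sub (base_indep baseB) (subsetIl _ _).
- by rewrite xsum_indicator setIT (card_base baseB).
Qed.

Lemma dot_indicator (w : E -> R) B : \sum_e w e * indicator B e = cost w B.
Proof.
rewrite /cost [RHS]big_mkcond; apply: eq_bigr => e _; rewrite /indicator.
by case: (e \in B); rewrite ?mulr1 ?mulr0.
Qed.

Lemma bilin_matvecr (x z : E -> R) : bilin z L x = \sum_e matvec L x e * z e.
Proof.
rewrite /bilin /matvec; apply: eq_bigr => e _; rewrite mulr_suml.
by apply: eq_bigr => f _; ring.
Qed.

Lemma bilin_matvecl (x z : E -> R) : bilin x L z = \sum_e matvec L x e * z e.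
Proof.
rewrite /bilin /matvec exchange_big; apply: eq_bigr => e _.
by rewrite mulr_suml; apply: eq_bigr => f _; rewrite L_sym; ring.
Qed.

Lemma nash_response_iff (x z : E -> R) :
  bilin x L z <= bilin x L x /\ bilin x L x <= bilin z L x <->
  \sum_e matvec L x e * z e = \sum_e matvec L x e * x e.
Proof.
rewrite [bilin z L x]bilin_matvecr !bilin_matvecl; split => [[le1 le2]|->] //.
by apply/le_anti; rewrite le1 le2.
Qed.

Variable x : E -> R.
Local Notation w := (matvec L x).

Lemma sym_nash_equal_costs :
  sym_nash M L x ->
  forall B1 B2, is_base M B1 -> is_base M B2 -> cost w B1 = cost w B2.
Proof.
case=> _ nashx B1 B2 base1 base2.
have costE B : is_base M B -> cost w B = \sum_e w e * x e.
  by move=> baseB; rewrite -dot_indicator;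
    apply/nash_response_iff/nashx/indicator_base_polytope.
by rewrite !costE.
Qed.

Lemma level_xsum_rank_sym_nash :
  in_base_polytope M x ->
  (forall e, xsum x (level_set w e) = (rank M (level_set w e))%:R) ->
  sym_nash M L x.
Proof.
move=> polyx xsumP; split => // z [_ [zle zT]]; apply/nash_response_iff.
have zP e : xsum z (level_set w e) = xsum x (level_set w e).
  apply: level_sums_eq => [f|]; first by rewrite xsumP zle.
  by case: polyx => _ [_ ->].
rewrite dot_level_sets [RHS]dot_level_sets.
by apply: eq_bigr => e _; rewrite zP.
Qed.

End MatroidGame.

Section Equivalences.
Variables (E : finType) (M : matroid E) (R : realType) (w : E -> R).

Lemma equal_costs_circuit_level :
  (forall B1 B2, is_base M B1 -> is_base M B2 -> cost w B1 = cost w B2) ->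
  forall C, is_circuit M C -> exists e, C \subset level_set w e.
Proof.
move=> eqcost C circC; have [e eC] : exists e, e \in C.
  by apply/set0Pn; apply: contraNneq (circuit_dep circC) => ->; apply: indep_set0.
exists e; apply/subsetP => f fC; rewrite inE.
have [-> //|fNe] := eqVneq f e.
have [B [baseB fB eNB baseB']] := circuit_base_exchange circC eC fC fNe.
have eNBf : e \notin B :\ f by rewrite inE (negbTE eNB) andbF.
have := eqcost _ _ baseB baseB'.
by rewrite /cost (big_setU1 _ eNBf) (big_setD1 f fB) /= => /addIr->.
Qed.

Lemma circuit_level_base_meet :
  (forall C, is_circuit M C -> exists e, C \subset level_set w e) ->
  forall B e, is_base M B -> #|B :&: level_set w e| = rank M (level_set w e).
Proof.
move=> circP B e baseB; apply: card_maximal_indep (subsetIr _ _) _.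
  exact: indep_sub (base_indep baseB) (subsetIl _ _).
move=> g gP gNBP; have gNB : g \notin B by move: gNBP; rewrite inE gP andbT.
have [C [circC gC sCgB]] := fundamental_circuit baseB gNB.
have [e' sCe'] := circP C circC.
apply: contra (circuit_dep circC) => /indep_sub; apply.
apply/subsetP => y yC; move: (subsetP sCgB y yC); rewrite !inE.
case/orP => [->//|yB]; rewrite yB /=; apply/orP; right.
move: gP (subsetP sCe' y yC) (subsetP sCe' g gC); rewrite !inE.
by move=> /eqP<- /eqP-> /eqP->.
Qed.

Lemma base_meet_level_xsum_rank (x : E -> R) :
  in_base_polytope M x ->
  (forall B e, is_base M B -> #|B :&: level_set w e| = rank M (level_set w e)) ->
  forall e, xsum x (level_set w e) = (rank M (level_set w e))%:R.
Proof.
move=> [_ [xle xT]] meetP e; have [B baseB] := exists_base M.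
have meetE f : xsum (indicator R B) (level_set w f) = (rank M (level_set w f))%:R.
  by rewrite xsum_indicator meetP.
rewrite -meetE; apply: level_sums_eq => [f|]; first by rewrite meetE xle.
by rewrite xT xsum_indicator setIT (card_base baseB).
Qed.

End Equivalences.

Unset Implicit Arguments. Set Strict Implicit.

Theorem theorem9 (E : finType) (M : matroid E) (R : realType)
    (L : E -> E -> R) (x : E -> R) :
  (forall e f, L e f = L f e) ->
  in_base_polytope M x ->
  [<-> sym_nash M L x;
       (forall B1 B2, is_base M B1 -> is_base M B2 ->
          cost (matvec L x) B1 = cost (matvec L x) B2);
       (forall B e, is_base M B ->
          #|B :&: level_set (matvec L x) e| = rank M (level_set (matvec L x) e));
       (forall e, xsum x (level_set (matvec L x) e)
                    = (rank M (level_set (matvec L x) e))%:R);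
       (forall C, is_circuit M C ->
          exists e, C \subset level_set (matvec L x) e)].
Proof.
move=> L_sym polyx.
have i_ii := @sym_nash_equal_costs _ M _ L L_sym x.
have ii_v := @equal_costs_circuit_level _ M _ (matvec L x).
have v_iii := @circuit_level_base_meet _ M _ (matvec L x).
have iii_iv := base_meet_level_xsum_rank polyx.
have iv_i := level_xsum_rank_sym_nash L_sym polyx.
tfae => [/i_ii | /ii_v/v_iii | /iii_iv | /iv_i/i_ii/ii_v | /v_iii/iii_iv/iv_i] //.
Qed.
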